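(* Let $(G,N,\theta)_{\mathcal{H}}$ be a modular $\mathcal{H}$-triple with $E=\mathbb{F}_p[\theta]$, $m=\theta(1)$, let $X:N\to\mathrm{GL}_m(E)=A^\times$ be a representation affording $\theta$ realized over $E$, let $A=\mathrm{M}_m(E)$ be the $G$-algebra associated with $(G,N,\theta)_{\mathcal{H}}$ and $X$, and let $\iota:A\to\mathrm{M}_{ms}(\mathbb{F}_p)$ be a unitary $\mathbb{F}_p$-algebra embedding, where $s=[E:\mathbb{F}_p]$. Then there is a function $Y:G\to\mathrm{GL}_{ms}(\mathbb{F}_p)$ such that (1) $Y(g)^{-1}\iota(x)Y(g)=\iota(x^g)$ for all $x\in A$, $g\in G$; (2) $Y(n)=\iota(X(n))$ for all $n\in N$; (3) $Y(gn)=Y(g)Y(n)$ and $Y(ng)=Y(n)Y(g)$ for all $n\in N$, $g\in G$.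
   Context: $p$ is a prime; $F$ a sufficiently large finite field of characteristic $p$, residue field of a $p$-modular system $(\mathcal{K},\mathcal{O},F)$; $\mathcal{H}$ a group of automorphisms of $\mathcal{K}$ preserving $\mathcal{O}$, acting on $F$ and inducing all automorphisms of $F$. A modular $\mathcal{H}$-triple $(G,N,\theta)_{\mathcal{H}}$: $N\trianglelefteq G$ finite, $\theta\in\mathrm{IBr}(N)$ with $G$-stable $\mathcal{H}$-orbit. $\mathbb{F}_p[\theta]$: subfield of $F$ generated over $\mathbb{F}_p$ by the reductions of the values of $\theta$. The $G$-algebra associated with $(G,N,\theta)_{\mathcal{H}}$ and $X$: for $g\in G$ let $\sigma_g\in\mathrm{Gal}(E/\mathbb{F}_p)$ be the unique element such that $n\mapsto X(gng^{-1})^{\sigma_g}$ (entrywise) affords $\theta$ (equivalently the restriction to $E$ of any $\tau\in\mathcal{H}$ with $\theta^\tau=\theta^{g^{-1}}$, $\theta^{g^{-1}}(n)=\theta(g^{-1}ng)$), choose $T_g\in\mathrm{GL}_m(E)$ with $X(gng^{-1})^{\sigma_g}=T_gX(n)T_g^{-1}$ for all $n\in N$, and let $G$ act on $A=\mathrm{M}_m(E)$ by $x^g=T_g^{-1}x^{\sigma_g}T_g$; this is a right action by $\mathbb{F}_p$-algebra automorphisms, with $X(n)^g=X(g^{-1}ng)$ and $(zx)^g=z^{\sigma_g}x^g$ for $z\in E$. *)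

From HB Require Import structures.
From mathcomp Require Import all_boot all_order all_algebra all_fingroup all_solvable all_field all_character.
Set Implicit Arguments. Unset Strict Implicit. Unset Printing Implicit Defensive.
Import GRing.Theory.
Local Open Scope ring_scope.

Definition galg_act (E : fieldType) (gT : finGroupType) (m : nat)
  (sigma : gT -> {rmorphism E -> E}) (T : gT -> 'M[E]_m) (g : gT)
  (x : 'M[E]_m) : 'M[E]_m :=
  invmx (T g) *m map_mx (sigma g) x *m T g.

From HB Require Import structures.
From mathcomp Require Import all_boot all_order all_algebra all_fingroup all_solvable all_field all_character.
Set Implicit Arguments. Unset Strict Implicit. Unset Printing Implicit Defensive.
Import GRing.Theory.
Local Open Scope ring_scope.

(* Two facts drive the construction.  First, any two unital ring embeddings
   of M_m(E) into M_(ms)(F_p) are conjugate: each makes the row space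
   F_p^(ms) a module over M_m(E) isomorphic to the simple module E^m (by
   counting), and an F_p-linear module isomorphism is a matrix.  Hence for
   every coset representative r of N in G there is an invertible Y0(r) with
   Y0(r)^-1 iota(x) Y0(r) = iota(x^r).  Second, x |-> x^(rn) and
   x |-> X(n)^-1 x^r X(n) are twisted conjugations agreeing on X(N); since
   the traces of X generate E the twisting automorphisms coincide, and by
   Schur's lemma (X is absolutely irreducible) the conjugating matrices
   differ by a scalar, so the two maps agree.  Therefore
   Y(rn) := Y0(r) iota(X(n)) works, with Y0(1) := 1. *)

Lemma mx_rmorphM (R S : pzRingType) m n (f : {rmorphism 'M[R]_m -> 'M[S]_n}) a b :
  f (a *m b) = f a *m f b.
Proof. by rewrite mulmxE rmorphM. Qed.

Lemma invmxM (R : comUnitRingType) n (A B : 'M[R]_n) :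
  A \in unitmx -> B \in unitmx -> invmx (A *m B) = invmx B *m invmx A.
Proof.
move=> uA uB; have uAB : A *m B \in unitmx by rewrite unitmx_mul uA uB.
have AB_inv : A *m B *m (invmx B *m invmx A) = 1%:M by rewrite mulmxA mulmxK // mulmxV.
by rewrite -[LHS]mulmx1 -AB_inv mulKmx.
Qed.

Lemma rV_mul_delta (F : fieldType) n (z : 'rV[F]_n) (j : 'I_n) :
  z != 0 -> exists x : 'M_n, z *m x = delta_mx 0 j.
Proof.
move=> z_nz; have /row_freeP[B zB] : row_free z by rewrite /row_free rank_rV z_nz.
by exists (B *m delta_mx 0 j); rewrite mulmxA zB mul1mx.
Qed.

Lemma Fp_zmod_morphism_scalable p (U V : lmodType 'F_p) (f : U -> V) :
  zmod_morphism f -> scalable f.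
Proof.
move=> fB a u; pose fA : {additive U -> V} := HB.pack f (GRing.isZmodMorphism.Build U V f fB).
by rewrite -[f]/(fA : _ -> _) -[a]natr_Zp !scaler_nat raddfMn.
Qed.

Lemma Fp_zmod_morphism_mx p n1 n2 (f : 'rV['F_p]_n1 -> 'rV['F_p]_n2) :
  zmod_morphism f -> exists A, forall v, v *m A = f v.
Proof.
move=> fB; pose fL : {linear 'rV_n1 -> 'rV_n2} := HB.pack f
  (GRing.isZmodMorphism.Build _ _ f fB)
  (GRing.isScalable.Build _ _ _ _ f (Fp_zmod_morphism_scalable fB)).
by exists (lin1_mx fL) => v; rewrite mul_rV_lin1.
Qed.

Section MatrixRingEmbedding.
Variables (E F : finFieldType) (k s : nat).
Hypothesis cardE : #|E| = (#|F| ^ s)%N.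
Variable phi : {rmorphism 'M[E]_k.+1 -> 'M[F]_(k.+1 * s)}.
Hypothesis phi_inj : injective phi.

Lemma rmorph_row_module_iso :
  exists f : {additive 'rV[E]_k.+1 -> 'rV[F]_(k.+1 * s)},
    bijective f /\ forall z x, f z *m phi x = f (z *m x).
Proof.
pose e00 : 'M[E]_k.+1 := delta_mx 0 0.
have e00_nz : e00 != 0.
  by apply/eqP => /matrixP/(_ 0 0); rewrite !mxE /= => /eqP; rewrite oner_eq0.
have [i u_nz] : exists i, row i (phi e00) != 0.
  apply/existsP; move: e00_nz; rewrite -(raddf_eq0 _ phi_inj); apply: contraR.
  by move=> /existsPn u0; apply/eqP/row_matrixP => i; rewrite row0; apply/eqP/negPn/u0.
set u := row i (phi e00) in u_nz.
have u_fixed : u *m phi e00 = u by rewrite /u rowE -mulmxA -mx_rmorphM mul_delta_mx.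
pose f : {additive 'rV[E]_k.+1 -> 'rV[F]_(k.+1 * s)} :=
  mulmx u \o phi \o mulmx (delta_mx 0 0 : 'cV[E]_k.+1).
have f_mod z x : f z *m phi x = f (z *m x) by rewrite /f /= -mulmxA -mx_rmorphM -mulmxA.
have f_e0 : f (delta_mx 0 0) = u by rewrite /f /= mul_delta_mx u_fixed.
have f_inj : injective f.
  suff f0 z : f z = 0 -> z = 0.
    by move=> a b fab; apply/eqP; rewrite -subr_eq0 (f0 (a - b)) // raddfB fab subrr.
  move=> fz0; apply/eqP; apply: contraT => z_nz; have [x zx] := rV_mul_delta 0 z_nz.
  by move: (f_mod z x); rewrite fz0 mul0mx zx f_e0 => u0; rewrite -u0 eqxx in u_nz.
exists f; split=> //; apply: (@inj_card_bij 'rV[E]_k.+1 'rV[F]_(k.+1 * s) f f_inj).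
by rewrite !card_mx cardE -expnM !(muln1, mul1n) [(s * _)%N]mulnC.
Qed.

End MatrixRingEmbedding.

Lemma rmorph_mx_conj p (E : finFieldType) k s
    (phi psi : {rmorphism 'M[E]_k.+1 -> 'M['F_p]_(k.+1 * s)}) :
  prime p -> #|E| = (p ^ s)%N -> injective phi -> injective psi ->
  exists2 Y, Y \in unitmx & forall x, phi x *m Y = Y *m psi x.
Proof.
move=> p_pr cardE phi_inj psi_inj; rewrite -(card_Fp p_pr) in cardE.
have [f [[f' fK f'K] f_mod]] := rmorph_row_module_iso cardE phi_inj.
have [g [[g' gK g'K] g_mod]] := rmorph_row_module_iso cardE psi_inj.
have comp_zmod (h1 h2 : {additive 'rV[E]_k.+1 -> 'rV['F_p]_(k.+1 * s)}) h2' :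
    cancel h2 h2' -> cancel h2' h2 -> zmod_morphism (h1 \o h2').
  by move=> h2K h2'K a b; rewrite /= (can2_zmod_morphism h2K h2'K) raddfB.
have [Y YE] := Fp_zmod_morphism_mx (comp_zmod g _ _ fK f'K).
have [Y' Y'E] := Fp_zmod_morphism_mx (comp_zmod f _ _ gK g'K).
have {}YE z : f z *m Y = g z by rewrite YE /= fK.
exists Y.
  suff /mulmx1_unit[] : Y *m Y' = 1%:M by [].
  apply/row_matrixP => i; rewrite !rowE -(f'K 'e_i) mulmxA YE Y'E /= gK.
  by rewrite mulmx1.
move=> x; apply/row_matrixP => i; rewrite !rowE -(f'K 'e_i).
by rewrite !mulmxA f_mod !YE g_mod.
Qed.

Lemma fmorph_eq_divring_closed (E F : fieldType) (s1 s2 : {rmorphism E -> F}) :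
  GRing.divring_closed [pred z | s1 z == s2 z].
Proof.
split=> [|a b|a b]; rewrite !inE ?rmorph1 // => /eqP s12a /eqP s12b.
  by rewrite !rmorphB s12a s12b.
by rewrite !fmorph_div s12a s12b.
Qed.

Section TwistedConjugation.
Variables (E : fieldType) (gT : finGroupType) (N : {group gT}) (m : nat).
Variable X : mx_representation E N m.
Hypothesis absX : mx_absolutely_irreducible X.
Hypothesis trace_gen : forall S : {pred E}, GRing.divring_closed S ->
  (forall n, n \in N -> \tr (X n) \in S) -> forall z, z \in S.

Lemma twisted_conj_eq (s1 s2 : {rmorphism E -> E}) (A1 A2 : 'M[E]_m) :
    A1 \in unitmx -> A2 \in unitmx ->
    (forall n, n \in N ->
       invmx A1 *m map_mx s1 (X n) *m A1 = invmx A2 *m map_mx s2 (X n) *m A2) ->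
  forall x, invmx A1 *m map_mx s1 x *m A1 = invmx A2 *m map_mx s2 x *m A2.
Proof.
move=> uA1 uA2 eqX.
have trJ (A B : 'M[E]_m) : A \in unitmx -> \tr (invmx A *m B *m A) = \tr B.
  by move=> uA; rewrite mxtrace_mulC mulmxA mulmxV // mul1mx.
have s12 : s1 =1 s2.
  move=> z; apply/eqP; apply: (trace_gen (fmorph_eq_divring_closed s1 s2)) => n nN.
  by rewrite inE -!trace_map_mx -(trJ A1) // -(trJ A2 (map_mx s2 _)) // eqX.
have [D defD] : exists D, D = A1 *m invmx A2 by exists (A1 *m invmx A2).
have D_cent : centgmx (map_repr s2 X) D.
  apply/centgmxP => n nN; rewrite map_reprE defD mulmxA.
  have := congr1 (fun B => A1 *m B *m invmx A2) (eqX n nN).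
  by rewrite (eq_map_mx _ s12) /= !mulmxA mulmxV // mul1mx mulmxK // => ->.
have absX2 : mx_absolutely_irreducible (map_repr s2 X) by rewrite map_mx_abs_irr.
have [a Da] := is_scalar_mxP (mx_abs_irr_cent_scalar absX2 D_cent).
have A1E : A1 = D *m A2 by rewrite defD mulmxKV.
have A1D : invmx A1 *m D = invmx A2 by rewrite defD mulmxA mulVmx // mul1mx.
move=> x; rewrite (eq_map_mx _ s12) -A1D Da -(mulmxA _ a%:M) -scalar_mxC -Da.
by rewrite !mulmxA -(mulmxA _ D) -A1E.
Qed.

End TwistedConjugation.

Section LcosetRepr.
Local Open Scope group_scope.
Variables (gT : finGroupType) (G N : {group gT}).
Hypothesis nNG : N <| G.

Lemma repr_lcoset_cofactor g : (repr (g *: N))^-1 * g \in N.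
Proof.
have := mem_repr _ (lcoset_refl N g); rewrite mem_lcoset => gr.
by rewrite -[_ * g]invgK invMg invgK groupV.
Qed.

Lemma repr_lcoset_mem g : g \in G -> repr (g *: N) \in G.
Proof.
move=> Gg; have := mem_repr _ (lcoset_refl N g); rewrite mem_lcoset => gr.
by rewrite -(mulKVg g (repr _)) groupM // (subsetP (normal_sub nNG)).
Qed.

Lemma repr_lcoset_id n : n \in N -> repr (n *: N) = 1.
Proof. by move=> Nn; rewrite lcoset_id // repr_group. Qed.

Lemma repr_lcosetMr g n : n \in N -> repr ((g * n) *: N) = repr (g *: N).
Proof. by move=> Nn; rewrite lcosetM lcoset_id. Qed.

Lemma repr_lcosetMl g n : g \in G -> n \in N -> repr ((n * g) *: N) = repr (g *: N).
Proof.
move=> Gg Nn; rewrite conjgC repr_lcosetMr //.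
by rewrite memJ_norm // (subsetP (normal_norm nNG)).
Qed.

End LcosetRepr.

Section GAlgebraMorphism.
Variables (E : fieldType) (gT : finGroupType) (m : nat).
Variables (sigma : gT -> {rmorphism E -> E}) (T : gT -> 'M[E]_m) (g : gT).

Lemma galg_act_is_zmod_morphism : zmod_morphism (galg_act sigma T g).
Proof. by move=> a b; rewrite /galg_act map_mxB mulmxBr mulmxBl. Qed.

Hypothesis unitT : T g \in unitmx.

Lemma galg_act_is_monoid_morphism : monoid_morphism (galg_act sigma T g).
Proof.
split=> [|a b]; rewrite /galg_act -?mulmxE; first by rewrite map_mx1 mulmx1 mulVmx.
by rewrite map_mxM !mulmxA mulmxK.
Qed.

Definition galg_rmorphism : {rmorphism 'M[E]_m -> 'M[E]_m} :=
  HB.pack (galg_act sigma T g)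
    (GRing.isZmodMorphism.Build _ _ _ galg_act_is_zmod_morphism)
    (GRing.isMonoidMorphism.Build _ _ _ galg_act_is_monoid_morphism).

Lemma galg_act_inj : injective (galg_act sigma T g).
Proof.
move=> a b /(congr1 (fun y => T g *m y *m invmx (T g))).
rewrite /galg_act !mulmxA mulmxV // !mul1mx !mulmxK //; exact: map_mx_inj.
Qed.

End GAlgebraMorphism.

Section GAlgebra.
Variables (E : fieldType) (gT : finGroupType) (G N : {group gT}) (m : nat).
Variables (X : mx_representation E N m) (sigma : gT -> {rmorphism E -> E}) (T : gT -> 'M[E]_m).
Hypotheses (nNG : (N <| G)%g) (absX : mx_absolutely_irreducible X).
Hypothesis trace_gen : forall S : {pred E}, GRing.divring_closed S ->
  (forall n, n \in N -> \tr (X n) \in S) -> forall z, z \in S.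
Hypothesis unitT : forall g, g \in G -> T g \in unitmx.
Hypothesis conjT : forall g n, g \in G -> n \in N ->
  map_mx (sigma g) (X (n ^ g^-1)%g) = T g *m X n *m invmx (T g).

Let galg := galg_act sigma T.

Lemma galg_act_repr g n : g \in G -> n \in N -> galg g (X n) = X (n ^ g)%g.
Proof.
move=> Gg Nn; have Nng : (n ^ g)%g \in N.
  by rewrite memJ_norm // (subsetP (normal_norm nNG)).
by rewrite /galg /galg_act -{1}(conjgK g n) conjT // !mulmxA mulmxKV ?mulVmx ?mul1mx ?unitT.
Qed.

Lemma galg_act1 x : galg 1%g x = x.
Proof.
have idE y : invmx 1%:M *m map_mx (idfun : {rmorphism E -> E}) y *m 1%:M = y.
  by rewrite invmx1 mul1mx mulmx1 map_mx_id.
rewrite -[RHS]idE; apply: (twisted_conj_eq absX trace_gen) => [||n Nn]; rewrite ?unitT ?unitmx1 //.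
by rewrite -[LHS]/(galg 1%g (X n)) galg_act_repr // conjg1 idE.
Qed.

Lemma galg_actM g n x : g \in G -> n \in N ->
  galg (g * n)%g x = invmx (X n) *m galg g x *m X n.
Proof.
move=> Gg Nn; have Ggn : (g * n)%g \in G by rewrite groupM // (subsetP (normal_sub nNG)).
have galgJ y : invmx (X n) *m galg g y *m X n
             = invmx (T g *m X n) *m map_mx (sigma g) y *m (T g *m X n).
  by rewrite invmxM ?repr_mx_unit ?unitT // /galg /galg_act !mulmxA.
rewrite galgJ; apply: (twisted_conj_eq absX trace_gen) => [||a Na].
- exact: unitT.
- by rewrite unitmx_mul unitT ?repr_mx_unit.
rewrite -[LHS]/(galg (g * n)%g (X a)) -galgJ !galg_act_repr // conjgM conjgE.
have Nag : (a ^ g)%g \in N by rewrite memJ_norm // (subsetP (normal_norm nNG)).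
have NnVa : (n^-1 * a ^ g)%g \in N by rewrite groupM ?groupV.
by rewrite -repr_mxV // -!repr_mxM ?groupV // mulgA.
Qed.

Section Extension.
Variables (K : comUnitRingType) (d : nat) (iota : {rmorphism 'M[E]_m -> 'M[K]_d}).
Variable Y0 : gT -> 'M[K]_d.
Hypotheses (Y0_1 : Y0 1%g = 1%:M) (unitY0 : forall r, r \in G -> Y0 r \in unitmx).
Hypothesis conjY0 : forall r x, r \in G -> iota x *m Y0 r = Y0 r *m iota (galg r x).

Let rep g := repr (g *: N)%g.
Let Y g := Y0 (rep g) *m iota (X ((rep g)^-1 * g)%g).

Let iotaXM a b : a \in N -> b \in N -> iota (X (a * b)%g) = iota (X a) *m iota (X b).
Proof. by move=> Na Nb; rewrite repr_mxM // mx_rmorphM. Qed.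

Lemma unit_iotaX n : n \in N -> iota (X n) \in unitmx.
Proof.
move=> Nn; suff /mulmx1_unit[] : iota (X n) *m iota (X n^-1)%g = 1%:M by [].
by rewrite -iotaXM ?groupV // mulgV repr_mx1 rmorph1.
Qed.

Lemma unitY g : g \in G -> Y g \in unitmx.
Proof.
by move=> Gg; rewrite unitmx_mul unitY0 ?repr_lcoset_mem ?unit_iotaX ?repr_lcoset_cofactor.
Qed.

Lemma Y_conj g x : g \in G -> invmx (Y g) *m iota x *m Y g = iota (galg g x).
Proof.
move=> Gg; rewrite -mulmxA; apply: (canLR (mulKmx (unitY Gg))).
have Gr : rep g \in G by apply: repr_lcoset_mem.
have cofN : ((rep g)^-1 * g)%g \in N by apply: repr_lcoset_cofactor.
have -> : galg g x = invmx (X ((rep g)^-1 * g)%g) *m galg (rep g) x *m X ((rep g)^-1 * g)%g.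
  by rewrite -galg_actM // mulKVg.
rewrite /Y mulmxA conjY0 // -!mulmxA -!mx_rmorphM !mulmxA mulmxV ?mul1mx //.
exact: repr_mx_unit.
Qed.

Lemma Y_repr n : n \in N -> Y n = iota (X n).
Proof. by move=> Nn; rewrite /Y /rep repr_lcoset_id // Y0_1 mul1mx invg1 mul1g. Qed.

Lemma YMr g n : g \in G -> n \in N -> Y (g * n)%g = Y g *m Y n.
Proof.
move=> Gg Nn; rewrite [Y n]Y_repr // /Y /rep repr_lcosetMr // mulgA iotaXM //.
  by rewrite mulmxA.
exact: repr_lcoset_cofactor.
Qed.

Lemma YMl g n : g \in G -> n \in N -> Y (n * g)%g = Y n *m Y g.
Proof.
move=> Gg Nn; have Gr : rep g \in G by apply: repr_lcoset_mem.
rewrite [Y n]Y_repr // /Y /rep (repr_lcosetMl nNG) // -/(rep g).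
have -> : ((rep g)^-1 * (n * g) = (n ^ rep g) * ((rep g)^-1 * g))%g.
  by rewrite conjgE !mulgA mulgK.
rewrite iotaXM ?repr_lcoset_cofactor ?memJ_norm ?(subsetP (normal_norm nNG)) //.
by rewrite mulmxA -galg_act_repr // -conjY0 // mulmxA.
Qed.

Lemma galg_extension : exists Y : gT -> 'M[K]_d,
  [/\ forall g, g \in G -> Y g \in unitmx,
      forall g x, g \in G -> invmx (Y g) *m iota x *m Y g = iota (galg g x),
      forall n, n \in N -> Y n = iota (X n)
    & forall g n, g \in G -> n \in N -> Y (g * n)%g = Y g *m Y n /\ Y (n * g)%g = Y n *m Y g].
Proof.
exists Y; split=> [g|g x|n|g n Gg Nn]; [exact: unitY|exact: Y_conj|exact: Y_repr|].
by rewrite YMr ?YMl.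
Qed.

End Extension.

End GAlgebra.

Theorem mainTheorem8 (p : nat) (E : finFieldType) (gT : finGroupType)
  (G N : {group gT}) (m s : nat) (X : mx_representation E N m)
  (sigma : gT -> {rmorphism E -> E}) (T : gT -> 'M[E]_m)
  (iota : {rmorphism 'M[E]_m -> 'M['F_p]_(m * s)}) :
  prime p -> p \in [pchar E] -> #|E| = (p ^ s)%N ->
  (N <| G)%g ->
  mx_absolutely_irreducible X ->
  (forall S : {pred E}, GRing.divring_closed S ->
     (forall n, n \in N -> (p^'.-elt n)%g -> \tr (X n) \in S) ->
     forall z : E, z \in S) ->
  (forall g, g \in G -> T g \in unitmx) ->
  (forall g n, g \in G -> n \in N ->
     map_mx (sigma g) (X (n ^ g^-1)%g) = T g *m X n *m invmx (T g)) ->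
  injective iota ->
  exists Y : gT -> 'M['F_p]_(m * s),
    [/\ forall g, g \in G -> Y g \in unitmx,
        forall g x, g \in G ->
          invmx (Y g) *m iota x *m Y g = iota (galg_act sigma T g x),
        forall n, n \in N -> Y n = iota (X n)
      & forall g n, g \in G -> n \in N ->
          Y (g * n)%g = Y g *m Y n /\ Y (n * g)%g = Y n *m Y g].
Proof.
move=> p_pr _ cardE nNG absX gen_traces unitT conjT iota_inj.
have trace_gen : forall S : {pred E}, GRing.divring_closed S ->
    (forall n, n \in N -> \tr (X n) \in S) -> forall z, z \in S.
  by move=> S S_closed trS; apply: gen_traces => // n Nn _; exact: trS.
clear gen_traces; case: m X T iota absX trace_gen unitT conjT iota_inj => [|k] X T iota absX.
  by case/andP: absX.
move=> trace_gen unitT conjT iota_inj.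
have /fin_all_exists[Y0 Y0P] (r : gT) : exists Y : 'M['F_p]_(k.+1 * s), r \in G ->
    [/\ r = 1%g -> Y = 1%:M, Y \in unitmx
      & forall x, iota x *m Y = Y *m iota (galg_act sigma T r x)].
  have [-> | r_nt] := eqVneq r 1%g.
    exists 1%:M => _; split=> // [|x]; first exact: unitmx1.
    by rewrite (galg_act1 nNG absX trace_gen unitT conjT) mulmx1 mul1mx.
  case: (boolP (r \in G)) => [Gr | ]; last by exists 1%:M.
  pose psi := iota \o galg_rmorphism sigma (unitT r Gr).
  have psi_inj : injective psi by move=> a b /iota_inj /(galg_act_inj (unitT r Gr)).
  have [Y unitY YE] := rmorph_mx_conj p_pr cardE iota_inj psi_inj.
  by exists Y => _; split=> // /eqP; rewrite (negbTE r_nt).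
have Y0_1 : Y0 1%g = 1%:M by case: (Y0P 1%g (group1 G)) => ->.
apply: (galg_extension nNG absX trace_gen unitT conjT Y0_1) => [r /Y0P[] | r x /Y0P[]] //.
Qed.
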